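(* Let $\mathcal{P}$ be the set of paths of a $B_k$-EPG representation of a graph $G$ and let $P_1,P_2\in\mathcal{P}$. Then $P_1$ and $P_2$ edge-intersect if and only if $P_1\cap P_2$ contains at least one edge that is a relevant edge of $P_1$ or of $P_2$.
   Context: A grid is the set of integer points of the plane; a grid edge joins two grid points at distance $1$. A path in the grid is a sequence of distinct grid edges in which consecutive edges share exactly one grid point and non-consecutive edges share none; a bend is a pair of consecutive edges with different directions (horizontal/vertical), these being called bend edges. The first and last edges of a path are its extremity edges; the relevant edges of a path are its extremity edges and bend edges. Two paths edge-intersect if they share a grid edge. An EPG representation of $G$ is a family $(P_v)_{v\in V(G)}$ of grid paths such that distinct $u,v$ are adjacent iff $P_u,P_v$ share a grid edge; it is $B_k$-EPG if every path has at most $k$ bends. *)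

From Stdlib Require Import ZArith List Bool.
Import ListNotations.
Open Scope Z_scope.

Definition gpoint : Type := (Z * Z)%type.

(* A grid edge, encoded canonically by its lower/left endpoint (gx, gy) and
   its direction: horizontal edges join (gx,gy)-(gx+1,gy), vertical edges
   join (gx,gy)-(gx,gy+1).  These are exactly the unordered pairs of grid
   points at distance 1, each represented once. *)
Record gedge : Type := GEdge { gx : Z; gy : Z; horiz : bool }.

Definition endpoint (e : gedge) (p : gpoint) : Prop :=
  p = (gx e, gy e) \/
  p = (if horiz e then (gx e + 1, gy e) else (gx e, gy e + 1)).

Definition share_point (e f : gedge) : Prop :=
  exists p, endpoint e p /\ endpoint f p.

Definition share_exactly_one (e f : gedge) : Prop :=
  exists p, endpoint e p /\ endpoint f p /\
    forall q, endpoint e q -> endpoint f q -> q = p.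

Definition dummy_edge : gedge := GEdge 0 0 true.

Definition is_grid_path (l : list gedge) : Prop :=
  l <> [] /\ NoDup l /\
  (forall i, (S i < length l)%nat ->
     share_exactly_one (nth i l dummy_edge) (nth (S i) l dummy_edge)) /\
  (forall i j, (S i < j)%nat -> (j < length l)%nat ->
     ~ share_point (nth i l dummy_edge) (nth j l dummy_edge)).

Definition is_bend_at (l : list gedge) (i : nat) : bool :=
  Nat.ltb (S i) (length l) &&
  negb (Bool.eqb (horiz (nth i l dummy_edge)) (horiz (nth (S i) l dummy_edge))).

Definition nbends (l : list gedge) : nat :=
  length (filter (is_bend_at l) (seq 0 (length l))).

Definition relevant_edge (l : list gedge) (e : gedge) : Prop :=
  In e l /\
  (e = nth 0 l dummy_edge \/
   e = nth (pred (length l)) l dummy_edge \/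
   exists i, is_bend_at l i = true /\
             (e = nth i l dummy_edge \/ e = nth (S i) l dummy_edge)).

Definition edge_intersect (l1 l2 : list gedge) : Prop :=
  exists e, In e l1 /\ In e l2.

Definition finite_simple_graph (V : Type) (adj : V -> V -> Prop) : Prop :=
  (exists enum : list V, forall v, In v enum) /\
  (forall u v, adj u v -> adj v u) /\
  (forall v, ~ adj v v).

Definition Bk_EPG_rep (k : nat) (V : Type) (adj : V -> V -> Prop)
    (P : V -> list gedge) : Prop :=
  (forall v, is_grid_path (P v)) /\
  (forall v, (nbends (P v) <= k)%nat) /\
  (forall u v, u <> v -> (adj u v <-> edge_intersect (P u) (P v))).

From Stdlib Require Import ZArith List Bool Lia.

(* An edge of a path that is neither an extremity edge nor a bend edge is
   preceded and followed in the path by its two collinear neighbours, which are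
   the only grid edges of its direction touching it; so such an edge forces both
   of them into the path.  Now let e be a shared edge.  If it is not a bend edge
   of P1 together with its predecessor in P1, that predecessor is a collinear
   neighbour of e; if moreover e is not relevant for P2, the predecessor lies in
   P2 as well.  Walking backwards along P1 through shared edges thus either
   meets a relevant edge or ends at the first edge of P1, an extremity edge. *)

Definition shift_edge (d : Z) (f : gedge) : gedge :=
  if horiz f then GEdge (gx f + d) (gy f) true else GEdge (gx f) (gy f + d) false.

Definition collinear_neighbor (f g : gedge) : Prop :=
  g = shift_edge (-1) f \/ g = shift_edge 1 f.

Lemma collinear_neighbor_sym (f g : gedge) :
  collinear_neighbor f g -> collinear_neighbor g f.
Proof.
  destruct f as [x y []]; unfold collinear_neighbor, shift_edge; simpl;
    intros [-> | ->]; simpl; [right | left | right | left]; f_equal; lia.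
Qed.

Lemma collinear_neighbor_of_share_point (f g : gedge) :
  horiz g = horiz f -> share_point f g -> g <> f -> collinear_neighbor f g.
Proof.
  destruct f as [a b h], g as [x y h']; simpl; intros -> [p [Hf Hg]] Hne.
  unfold endpoint, collinear_neighbor, shift_edge in *; simpl in *.
  destruct h; destruct Hf as [Hf|Hf]; destruct Hg as [Hg|Hg]; subst p;
    injection Hg; intros; subst;
    first [ exfalso; apply Hne; f_equal; lia | left; f_equal; lia | right; f_equal; lia ].
Qed.

Lemma collinear_neighbor_two (f a b g : gedge) :
  collinear_neighbor f a -> collinear_neighbor f b -> a <> b ->
  collinear_neighbor f g -> g = a \/ g = b.
Proof.
  assert (Hlr : shift_edge (-1) f <> shift_edge 1 f).
  { destruct f as [x y []]; unfold shift_edge; simpl; intro H; injection H; lia. }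
  unfold collinear_neighbor; intros [-> | ->] [-> | ->] Hab [-> | ->]; tauto.
Qed.

Lemma not_bend_horiz (l : list gedge) (i : nat) :
  (S i < length l)%nat -> is_bend_at l i = false ->
  horiz (nth i l dummy_edge) = horiz (nth (S i) l dummy_edge).
Proof.
  unfold is_bend_at; intros Hl.
  rewrite (proj2 (Nat.ltb_lt _ _) Hl); simpl.
  rewrite negb_false_iff; apply Bool.eqb_prop.
Qed.

Lemma relevant_edge_nth_first (l : list gedge) : (0 < length l)%nat ->
  relevant_edge l (nth 0 l dummy_edge).
Proof. split; [apply nth_In | left]; auto. Qed.

Lemma relevant_edge_nth_bend (l : list gedge) (i : nat) : (S i < length l)%nat ->
  is_bend_at l i = true -> relevant_edge l (nth (S i) l dummy_edge).
Proof. split; [apply nth_In | right; right; exists i]; auto. Qed.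

Section GridPath.

Variable l : list gedge.
Hypothesis Hl : is_grid_path l.

Lemma grid_path_nth_inj (i j : nat) :
  (i < length l)%nat -> (j < length l)%nat -> i <> j ->
  nth i l dummy_edge <> nth j l dummy_edge.
Proof.
  intros Hi Hj Hij He; apply Hij.
  exact (proj1 (NoDup_nth l dummy_edge) (proj1 (proj2 Hl)) i j Hi Hj He).
Qed.

Lemma straight_step_collinear (i : nat) :
  (S i < length l)%nat -> is_bend_at l i = false ->
  collinear_neighbor (nth (S i) l dummy_edge) (nth i l dummy_edge).
Proof.
  intros Hi Hbend.
  destruct (proj1 (proj2 (proj2 Hl)) i Hi) as [p [Hp1 [Hp2 _]]].
  apply collinear_neighbor_of_share_point.
  - now apply not_bend_horiz.
  - now exists p.
  - apply grid_path_nth_inj; lia.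
Qed.

Lemma relevant_edge_or_collinear_neighbors_in (f : gedge) : In f l ->
  relevant_edge l f \/ (forall g, collinear_neighbor f g -> In g l).
Proof.
  intros Hf; destruct (In_nth l f dummy_edge Hf) as [m [Hm <-]].
  destruct m as [|m]; [left; now apply relevant_edge_nth_first|].
  destruct (Nat.eq_dec (S m) (pred (length l))) as [Hlast|Hlast].
  { left; split; [now apply nth_In | right; left; now rewrite <- Hlast]. }
  destruct (is_bend_at l m) eqn:Hb1; [left; now apply relevant_edge_nth_bend|].
  destruct (is_bend_at l (S m)) eqn:Hb2.
  { left; split; [apply nth_In | right; right; exists (S m)]; auto. }
  right; intros g Hg.
  assert (Hprev := straight_step_collinear m Hm Hb1).
  assert (Hnext := collinear_neighbor_sym _ _
                     (straight_step_collinear (S m) ltac:(lia) Hb2)).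
  destruct (collinear_neighbor_two _ _ _ g Hprev Hnext
              (grid_path_nth_inj m (S (S m)) ltac:(lia) ltac:(lia) ltac:(lia)) Hg)
    as [-> | ->]; apply nth_In; lia.
Qed.

End GridPath.

Lemma shared_nth_relevant (l1 l2 : list gedge) :
  is_grid_path l1 -> is_grid_path l2 ->
  forall j, (j < length l1)%nat -> In (nth j l1 dummy_edge) l2 ->
  exists e, In e l1 /\ In e l2 /\ (relevant_edge l1 e \/ relevant_edge l2 e).
Proof.
  intros Hl1 Hl2 j; induction j as [|j IH]; intros Hj Hin.
  - exists (nth 0 l1 dummy_edge); repeat split; auto using nth_In.
    left; now apply relevant_edge_nth_first.
  - destruct (is_bend_at l1 j) eqn:Hbend.
    { exists (nth (S j) l1 dummy_edge); repeat split; auto using nth_In.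
      left; now apply relevant_edge_nth_bend. }
    destruct (relevant_edge_or_collinear_neighbors_in l2 Hl2 _ Hin) as [Hrel|Hnbrs].
    { exists (nth (S j) l1 dummy_edge); repeat split; auto using nth_In. }
    apply IH; [lia|].
    now apply Hnbrs, straight_step_collinear.
Qed.

Theorem lemma3p2 (k : nat) (V : Type) (adj : V -> V -> Prop)
  (P : V -> list gedge) :
  finite_simple_graph V adj ->
  Bk_EPG_rep k V adj P ->
  forall u v : V,
    edge_intersect (P u) (P v) <->
    exists e, In e (P u) /\ In e (P v) /\
              (relevant_edge (P u) e \/ relevant_edge (P v) e).
Proof.
  intros _ [Hpath _] u v; split.
  - intros [e [Hu Hv]].
    destruct (In_nth _ _ dummy_edge Hu) as [j [Hj <-]].
    exact (shared_nth_relevant _ _ (Hpath u) (Hpath v) j Hj Hv).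
  - intros [e [Hu [Hv _]]]; now exists e.
Qed.
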